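(* Let $S\subset\mathbb{R}^q$ be compact and $\ell:\mathbb{R}^q\times\mathbb{R}^q\to(0,1)$ continuous. Let $s\in S$, let $(\xi_k)_{k\in\mathbb{N}}\subset\mathbb{R}^q$ be bounded, and let $d_1,d_2,\dots\in\{0,1\}$ be independent random variables with $\Pr(d_k=1)=\ell(s,\xi_k)$. Let $c_1,\dots,c_M\in S$ be distinct, let $\hat p_0:\{1,\dots,M\}\to(0,1)$ with $\sum_i\hat p_0(i)=1$, and define $\hat p_k$ by $$\hat p_k(i\mid d_{1:k};\xi_{1:k})=\frac{g(d_k\mid c_i;\xi_k)\,\hat p_{k-1}(i\mid d_{1:k-1};\xi_{1:k-1})}{\sum_{j=1}^M g(d_k\mid c_j;\xi_k)\,\hat p_{k-1}(j\mid d_{1:k-1};\xi_{1:k-1})},$$ where $g(d\mid x;\xi)=\ell(x,\xi)^d(1-\ell(x,\xi))^{1-d}$. Suppose $c_j=s$ for some $j\in\{1,\dots,M\}$. If for every $i\neq j$ there exists $p>\tfrac12$ such that $$\liminf_{n\to\infty}\frac{1}{n^p}\sum_{k=1}^n\big(\ell(s,\xi_k)-\ell(c_i,\xi_k)\big)^2>0,$$ then $\hat p_k(j\mid d_{1:k};\xi_{1:k})\to 1$ almost surely. *)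

From HB Require Import structures.
From mathcomp Require Import all_boot all_order all_algebra.
From mathcomp Require Import all_classical all_reals all_analysis.
Set Implicit Arguments. Unset Strict Implicit. Unset Printing Implicit Defensive.
Import Order.TTheory GRing.Theory Num.Theory.
Import numFieldNormedType.Exports.
Local Open Scope classical_set_scope.
Local Open Scope ring_scope.

Definition glik (R : realType) (q : nat) (l : 'rV[R]_q -> 'rV[R]_q -> R)
  (d : bool) (x xi : 'rV[R]_q) : R :=
  l x xi ^+ nat_of_bool d * (1 - l x xi) ^+ (1 - nat_of_bool d).

(* Bayesian posterior p_k(i | d_{1:k}; xi_{1:k}) on the candidates c_1..c_M,
   given an observation sequence dd (dd k = d_k, k >= 1) and designs xi. *)
Fixpoint phat (R : realType) (q M : nat) (l : 'rV[R]_q -> 'rV[R]_q -> R)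
  (c : 'I_M -> 'rV[R]_q) (p0 : 'I_M -> R) (xi : nat -> 'rV[R]_q)
  (dd : nat -> bool) (k : nat) (i : 'I_M) : R :=
  match k with
  | 0 => p0 i
  | k'.+1 =>
      glik l (dd k'.+1) (c i) (xi k'.+1) * phat l c p0 xi dd k' i /
      \sum_(j < M) glik l (dd k'.+1) (c j) (xi k'.+1) * phat l c p0 xi dd k' j
  end.

Definition indep_bits (dT : measure_display) (Omega : measurableType dT)
  (R : realType) (P : probability Omega R) (dd : nat -> Omega -> bool) : Prop :=
  forall (K : seq nat) (b : nat -> bool), uniq K -> all (fun k => 0 < k)%N K ->
    P (\big[setI/setT]_(k <- K) [set w | dd k w = b k]) =
    (\prod_(k <- K) P [set w | dd k w = b k])%E.

From HB Require Import structures.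
From mathcomp Require Import all_boot all_order all_algebra.
From mathcomp Require Import all_classical all_reals all_analysis.
From mathcomp Require Import ring lra.
Import Order.TTheory GRing.Theory Num.Theory.
Set Implicit Arguments. Unset Strict Implicit. Unset Printing Implicit Defensive.
Import numFieldNormedType.Exports.
Local Open Scope classical_set_scope.
Local Open Scope ring_scope.

(* Write rho_n(x) for the product over k <= n of the square roots of the
   likelihood ratios g(d_k | x; xi_k) / g(d_k | s; xi_k).  The posterior odds
   of a wrong candidate c_i against the true one c_j = s are
   p0 i / p0 j * rho_n(c_i)^2, so it suffices that n rho_n(c_i) <= 1 eventually.
   Under the true law, the expectation of rho_n(c_i) is a product of Bernoulli
   Bhattacharyya coefficients, each at most 1 - (l(s,xi_k) - l(c_i,xi_k))^2/4,
   hence at most exp(-delta n^p / 4) by the liminf hypothesis.  Markov's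
   inequality then gives P(n rho_n > 1) = O(n^-2), which is summable, and
   Borel-Cantelli concludes.  The expectation is a finite sum over the 2^n
   observation vectors, whose probabilities factor by independence. *)

Lemma sqrt_mul_le_mean (R : rcfType) (a b : R) : 0 <= a <= 1 -> 0 <= b <= 1 ->
  Num.sqrt (a * b) <= (a + b) / 2 - (a - b) ^+ 2 / 8.
Proof.
move=> /andP[a0 a1] /andP[b0 b1].
set r := Num.sqrt (a * b).
have r0 : 0 <= r := sqrtr_ge0 _.
have r2 : r ^+ 2 = a * b by rewrite sqr_sqrtr ?mulr_ge0.
have gap : ((a + b) / 2 - r) * ((a + b) / 2 + r) = (a - b) ^+ 2 / 4.
  by rewrite -subr_sqr r2; field.
have r_le_mean : r <= (a + b) / 2.
  rewrite leNgt; apply/negP => lt_mean.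
  have : 0 < (r - (a + b) / 2) * (r + (a + b) / 2) by apply: mulr_gt0; lra.
  have := sqr_ge0 (a - b); nra.
have r1 : r <= 1 by lra.
nra.
Qed.

Lemma bernoulli_bhattacharyya_le (R : rcfType) (a b : R) : 0 < a < 1 -> 0 < b < 1 ->
  Num.sqrt (a * b) + Num.sqrt ((1 - a) * (1 - b)) <= 1 - (a - b) ^+ 2 / 4.
Proof.
move=> /andP[a0 a1] /andP[b0 b1].
have := @sqrt_mul_le_mean _ a b; have := @sqrt_mul_le_mean _ (1 - a) (1 - b).
have -> : (1 - a - (1 - b)) ^+ 2 = (a - b) ^+ 2 by ring.
have := sqr_ge0 (a - b); lra.
Qed.

Lemma prod_one_sub_le_expR (R : realType) (I : Type) (r : seq I) (a : I -> R) :
  (forall i, a i <= 1) -> \prod_(i <- r) (1 - a i) <= expR (- \sum_(i <- r) a i).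
Proof.
move=> a1; rewrite -sumrN expR_sum; apply: ler_prod => i _.
by rewrite subr_ge0 a1; exact: expR_ge1Dx.
Qed.

Lemma natr_mul_expRN_powR_le (R : realType) (e p : R) (n : nat) :
  0 < e -> 1 / 2 <= p -> (0 < n)%N ->
  n%:R * expR (- (e * n%:R `^ p)) <= 720 / e ^+ 6 / n%:R ^+ 2.
Proof.
move=> e0 p12 n0.
have n1 : 1 <= (n%:R : R) by rewrite ler1n.
have n_gt0 : 0 < (n%:R : R) by lra.
set y := e * n%:R `^ p.
have y0 : 0 < y by rewrite mulr_gt0 ?powR_gt0.
have y6 : e ^+ 6 * n%:R ^+ 3 <= y ^+ 6.
  rewrite /y exprMn ler_pM2l ?exprn_gt0 //.
  rewrite -!powR_mulrn ?powR_ge0 ?(ltW n_gt0) // -powRrM.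
  by apply: (ler_powR n1); lra.
have exp_ge : y ^+ 6 / 720 <= expR y.
  by have := @expR_ge1Dxn _ y 5 (ltW y0); rewrite (_ : 6`!%:R = 720 :> R) //; lra.
set A := e ^+ 6 * n%:R ^+ 3 / 720.
have A0 : 0 < A by rewrite divr_gt0 ?mulr_gt0 ?exprn_gt0 ?ltr0n.
have AE : A <= expR y by apply: le_trans exp_ge; rewrite ler_pM2r ?invr_gt0 ?ltr0n.
have -> : 720 / e ^+ 6 / n%:R ^+ 2 = n%:R / A.
  by rewrite /A; field; rewrite ?gt_eqF.
by rewrite expRN ler_pM2l // lef_pV2 ?posrE ?expR_gt0.
Qed.

Lemma nneseries_inv_sqr_lty (R : realType) (u : nat -> \bar R) (C : R) :
  (forall n, (0 <= u n)%E) -> (forall n, (u n <= (C / n.+1%:R ^+ 2)%:E)%E) ->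
  (\sum_(n <oo) u n < +oo)%E.
Proof.
move=> u0 uC.
have C0 : 0 <= C by have := le_trans (u0 0%N) (uC 0%N); rewrite lee_fin expr1n divr1.
apply: (@le_lt_trans _ _ (2 * C)%:E); last exact: ltry.
apply: lime_le; first exact: is_cvg_nneseries.
apply: nearW => m; apply: le_trans (@lee_sum _ _ _ _ _ xpredT (fun n _ => uC n)) _.
rewrite sumEFin lee_fin.
have tel (n : nat) : (n.+1%:R ^+ 2)^-1 <= 2 * (n.+1%:R^-1 - n.+2%:R^-1) :> R.
  rewrite -[n.+2]addn1 -[n.+1]addn1 !natrD.
  have n0 : (0 : R) <= n%:R := ler0n _ _.
  have -> : 2 * ((n%:R + 1)^-1 - (n%:R + 1 + 1)^-1) = ((n%:R + 1) * (n%:R + 2) / 2)^-1 :> R.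
    by field; lra.
  rewrite lef_pV2 ?posrE ?exprn_gt0 ?divr_gt0 ?mulr_gt0; try lra; nra.
have tel_sum : \sum_(0 <= k < m) 2 * (k.+1%:R^-1 - k.+2%:R^-1) <= 2 :> R.
  rewrite -mulr_sumr ler_piMr //.
  rewrite (eq_bigr (fun k => - k.+2%:R^-1 - - k.+1%:R^-1)) => [|k _]; last first.
    by rewrite opprK addrC.
  rewrite (telescope_sumr (fun k => - k.+1%:R^-1)) // invr1 opprK.
  by rewrite gerDr oppr_le0 invr_ge0.
apply: le_trans (ler_sum _ (fun k _ => ler_wpM2l C0 (tel k))) _.
by rewrite -mulr_sumr [2 * C]mulrC ler_wpM2l.
Qed.

Lemma limn_einf_gt0 (R : realType) (u : nat -> R) :
  (0 < limn_einf (fun n => (u n)%:E))%E ->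
  exists2 e : R, 0 < e & \forall n \near \oo, e <= u n.
Proof.
have /cvg_lim einfE := @cvg_einfs_sup R (fun n => (u n)%:E).
rewrite limn_einf_lim einfE // => /ereal_sup_gt[_ [N _ <-]].
have einf_le n : (N <= n)%N -> (einfs (fun n => (u n)%:E) N <= (u n)%:E)%E.
  by move=> Nn; apply: ereal_inf_lbound; exists n.
move: (einf_le N (leqnn N)).
case: (einfs _ N) einf_le => [r| |] //= einf_le _ r0.
exists r; first by rewrite -lte_fin.
by exists N => // n /einf_le; rewrite lee_fin.
Qed.

Lemma ae_eventually_notin (d : measure_display) (T : measurableType d)
  (R : realType) (mu : {measure set T -> \bar R}) (E : nat -> set T) (C : R) :
  (forall n, measurable (E n)) ->
  (\forall n \near \oo, mu (E n) <= (C / n%:R ^+ 2)%:E)%E ->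
  \forall w \near almost_everywhere mu, \forall n \near \oo, ~ E n w.
Proof.
move=> mE [N _ EC].
pose N' := maxn N 1; pose F n := if (N' <= n)%N then E n else set0.
have mF n : measurable (F n) by rewrite /F; case: ifP.
have FC n : (mu (F n) <= (4 * `|C| / n.+1%:R ^+ 2)%:E)%E.
  rewrite /F; case: ifPn => [N'n|_]; last by rewrite measure0 lee_fin.
  have n1 : (1 <= n%:R :> R) by rewrite ler1n (leq_trans _ N'n) ?leq_maxr.
  apply: le_trans (EC n _) _; first by rewrite /= (leq_trans _ N'n) ?leq_maxl.
  have n0 : (0 < n%:R :> R) by lra.
  rewrite lee_fin (@le_trans _ _ (`|C| / n%:R ^+ 2)) //.
    by rewrite ler_pM2r ?invr_gt0 ?exprn_gt0 ?real_ler_norm ?num_real.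
  rewrite [4 * _]mulrC -mulrA ler_wpM2l // ler_pdivlMr ?exprn_gt0 //.
  rewrite mulrC ler_pdivrMr ?exprn_gt0 // -[n.+1]addn1 natrD; nra.
exists (lim_sup_set F); split.
- apply: bigcapT_measurable => m; exact: bigcup_measurable.
- exact: lim_sup_set_cvg0 mF (nneseries_inv_sqr_lty (fun n => measure_ge0 _ _) FC).
move=> w /= notev m _; apply: contrapT => Fmw; apply: notev.
exists (maxn m N') => // n /= mN'n En.
apply: Fmw; exists n; first by rewrite /= (leq_trans _ mN'n) ?leq_maxl.
by rewrite /F (leq_trans _ mN'n) ?leq_maxr.
Qed.

Lemma cvg1_squeeze_div_natr (R : realType) (u : nat -> R) (K : R) :
  (\forall n \near \oo, 0 <= 1 - u n <= K / n%:R) -> u n @[n --> \oo] --> (1 : R).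
Proof.
move=> uK; apply/cvgrPdist_lt => e e0; near=> n.
have /andP[u1 uKn] : 0 <= 1 - u n <= K / n%:R by near: n.
have Ke : K / e < n%:R by near: n; exact: nbhs_infty_gtr.
have n0 : 0 < (n%:R : R) by near: n; exact: nbhs_infty_gtr.
rewrite ger0_norm //; apply: le_lt_trans uKn _.
by rewrite ltr_pdivrMr // mulrC -ltr_pdivrMr.
Unshelve. all: by end_near.
Qed.

Lemma one_sub_weight_le (R : realFieldType) (I : finType) (a : I -> R) (j : I) :
  (forall i, 0 < a i) -> 0 <= 1 - a j / \sum_i a i <= \sum_(i | i != j) a i / a j.
Proof.
move=> a0; rewrite (bigD1 j) //=; set S := \sum_(i | i != j) a i.
have S0 : 0 <= S by apply: sumr_ge0 => i _; exact: ltW.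
have aj0 := a0 j.
have -> : 1 - a j / (a j + S) = S / (a j + S) by field; rewrite gt_eqF ?ltr_wpDr.
rewrite divr_ge0 ?addr_ge0 ?(ltW aj0) //= -mulr_suml.
rewrite -/S ler_wpM2l //.
by rewrite lef_pV2 ?posrE ?ltr_wpDr ?lerDl.
Qed.

Lemma measure_bigsetU_le (d : measure_display) (T : measurableType d)
  (R : realType) (mu : {measure set T -> \bar R}) (I : finType) (A : pred I)
  (F : I -> set T) : (forall i, measurable (F i)) ->
  (mu (\big[setU/set0]_(i | A i) F i) <= \sum_(i | A i) mu (F i))%E.
Proof.
move=> mF; suff [] : measurable (\big[setU/set0]_(i | A i) F i) /\
  (mu (\big[setU/set0]_(i | A i) F i) <= \sum_(i | A i) mu (F i))%E by [].
apply: (big_rec2 (fun X y => measurable X /\ (mu X <= y)%E)).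
  by rewrite measure0.
move=> i X y _ [mX muX]; split; first exact: measurableU.
by apply: le_trans (measureU2 _ _ _) _ => //; exact: leeD.
Qed.

Definition obs n (db : nat -> bool) : {ffun 'I_n -> bool} := [ffun k : 'I_n => db k.+1].

Section likelihood.
Variables (R : realType) (q : nat) (l : 'rV[R]_q -> 'rV[R]_q -> R).
Variable xi : nat -> 'rV[R]_q.
Hypothesis l01 : forall x z, 0 < l x z < 1.

Lemma glikT x z : glik l true x z = l x z.
Proof. by rewrite /glik /= expr1 expr0 mulr1. Qed.

Lemma glikF x z : glik l false x z = 1 - l x z.
Proof. by rewrite /glik /= expr0 expr1 mul1r. Qed.

Lemma glik_gt0 b x z : 0 < glik l b x z.
Proof. by have /andP[? ?] := l01 x z; case: b; rewrite ?glikT ?glikF ?subr_gt0. Qed.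

Definition lik n x (f : {ffun 'I_n -> bool}) : R :=
  \prod_(k < n) glik l (f k) x (xi k.+1).

Lemma lik_gt0 n x (f : {ffun 'I_n -> bool}) : 0 < lik x f.
Proof. by apply: prodr_gt0 => k _; exact: glik_gt0. Qed.

Lemma lik_obs0 x db : lik x (obs 0 db) = 1.
Proof. exact: big_ord0. Qed.

Lemma lik_obsS n x db :
  lik x (obs n.+1 db) = lik x (obs n db) * glik l (db n.+1) x (xi n.+1).
Proof.
rewrite /lik big_ord_recr /= ffunE; congr (_ * _).
by apply: eq_bigr => k _; rewrite !ffunE.
Qed.

Lemma phatE M (c : 'I_M -> 'rV[R]_q) (p0 : 'I_M -> R) db n i :
  (forall i, 0 < p0 i) -> \sum_(i < M) p0 i = 1 ->
  phat l c p0 xi db n i =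
  p0 i * lik (c i) (obs n db) / \sum_(m < M) p0 m * lik (c m) (obs n db).
Proof.
move=> p0_gt0 p0_sum; elim: n i => [|n IH] i.
  by under eq_bigr do rewrite lik_obs0 mulr1; rewrite lik_obs0 mulr1 p0_sum divr1.
rewrite /= IH; under eq_bigr do rewrite IH.
have w_gt0 k m : 0 < p0 m * lik (c m) (obs k db) by rewrite mulr_gt0 ?lik_gt0.
have Z_gt0 k : 0 < \sum_(m < M) p0 m * lik (c m) (obs k db).
  by rewrite (bigD1 i) //= ltr_wpDr ?w_gt0 ?sumr_ge0 // => m _; exact: ltW.
have -> : \sum_(m < M) glik l (db n.+1) (c m) (xi n.+1) *
            (p0 m * lik (c m) (obs n db) / \sum_(m < M) p0 m * lik (c m) (obs n db))
    = (\sum_(m < M) p0 m * lik (c m) (obs n.+1 db)) /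
      \sum_(m < M) p0 m * lik (c m) (obs n db).
  by rewrite mulr_suml; apply: eq_bigr => m _; rewrite lik_obsS; field; rewrite gt_eqF.
by rewrite lik_obsS; field; rewrite !gt_eqF.
Qed.

Definition sqrt_lik_ratio n s x (f : {ffun 'I_n -> bool}) : R :=
  \prod_(k < n) Num.sqrt (glik l (f k) x (xi k.+1) / glik l (f k) s (xi k.+1)).

Lemma sqrt_lik_ratio_ge0 n s x (f : {ffun 'I_n -> bool}) : 0 <= sqrt_lik_ratio s x f.
Proof. by apply: prodr_ge0 => k _; exact: sqrtr_ge0. Qed.

Lemma sqr_sqrt_lik_ratio n s x (f : {ffun 'I_n -> bool}) :
  sqrt_lik_ratio s x f ^+ 2 = lik x f / lik s f.
Proof.
rewrite -prodrXl /lik -prodf_div; apply: eq_bigr => k _.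
by rewrite sqr_sqrtr // divr_ge0 ?ltW ?glik_gt0.
Qed.

Lemma one_sub_phat_le M (c : 'I_M -> 'rV[R]_q) (p0 : 'I_M -> R) db n j :
  (forall i, 0 < p0 i) -> \sum_(i < M) p0 i = 1 ->
  0 <= 1 - phat l c p0 xi db n j <=
  \sum_(i < M | i != j) p0 i / p0 j * sqrt_lik_ratio (c j) (c i) (obs n db) ^+ 2.
Proof.
move=> p0_gt0 p0_sum; rewrite phatE //.
have /andP[-> le_sum] :=
  one_sub_weight_le j (fun i => mulr_gt0 (p0_gt0 i) (lik_gt0 (c i) (obs n db))).
apply: le_trans le_sum _; apply: ler_sum => i _.
by rewrite sqr_sqrt_lik_ratio mulrACA -invfM.
Qed.

Lemma phat_cvg1 M (c : 'I_M -> 'rV[R]_q) (p0 : 'I_M -> R) db j :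
  (forall i, 0 < p0 i) -> \sum_(i < M) p0 i = 1 ->
  (forall i, i != j ->
     \forall n \near \oo, n%:R * sqrt_lik_ratio (c j) (c i) (obs n db) <= 1) ->
  phat l c p0 xi db n j @[n --> \oo] --> (1 : R).
Proof.
move=> p0_gt0 p0_sum sep.
apply: (@cvg1_squeeze_div_natr _ _ (\sum_(i < M | i != j) p0 i / p0 j)).
have {}sep : \forall n \near \oo, forall i, i != j ->
    n%:R * sqrt_lik_ratio (c j) (c i) (obs n db) <= 1.
  apply: filter_forall => i; have [ij|_] := boolP (i != j); last exact: nearW.
  by apply: filterS (sep i ij) => n.
near=> n.
have sep_n : forall i, i != j -> n%:R * sqrt_lik_ratio (c j) (c i) (obs n db) <= 1.
  by near: n.
have n1 : 1 <= (n%:R : R) by rewrite ler1n; near: n; exact: nbhs_infty_gt.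
have /andP[ge0 le_sum] := one_sub_phat_le c db n j p0_gt0 p0_sum.
apply/andP; split => //; apply: le_trans le_sum _.
rewrite mulr_suml; apply: ler_sum => i ij.
rewrite ler_wpM2l ?divr_ge0 ?(ltW (p0_gt0 _)) // -[n%:R^-1]mul1r ler_pdivlMr; last lra.
have := sqrt_lik_ratio_ge0 (c j) (c i) (obs n db); have := sep_n i ij; nra.
Unshelve. all: by end_near.
Qed.

Lemma sqrt_lik_ratio_mul_lik_sum_le n s x :
  \sum_(f : {ffun 'I_n -> bool}) sqrt_lik_ratio s x f * lik s f <=
  \prod_(k < n) (1 - (l s (xi k.+1) - l x (xi k.+1)) ^+ 2 / 4).
Proof.
have sqrt_ratio_mul b z : Num.sqrt (glik l b x z / glik l b s z) * glik l b s z =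
                          Num.sqrt (glik l b x z * glik l b s z).
  have gs := glik_gt0 b s z; have gx := glik_gt0 b x z.
  rewrite -[in RHS](_ : glik l b x z / glik l b s z * glik l b s z ^+ 2 =
                        glik l b x z * glik l b s z); last by field; rewrite gt_eqF.
  by rewrite [RHS]sqrtrM ?divr_ge0 ?(ltW gx) ?(ltW gs) // sqrtr_sqr ger0_norm // ltW.
rewrite /sqrt_lik_ratio /lik; under eq_bigr do rewrite -big_split /=.
rewrite -(bigA_distr_bigA (fun (k : 'I_n) b =>
  Num.sqrt (glik l b x (xi k.+1) / glik l b s (xi k.+1)) * glik l b s (xi k.+1))).
apply: ler_prod => k _; rewrite big_bool /= !sqrt_ratio_mul !glikT !glikF.
rewrite addr_ge0 ?sqrtr_ge0 //= -sqrrN opprB.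
exact: bernoulli_bhattacharyya_le.
Qed.
End likelihood.

Section observations.
Variables (R : realType) (q : nat) (l : 'rV[R]_q -> 'rV[R]_q -> R).
Variables (xi : nat -> 'rV[R]_q) (s : 'rV[R]_q).
Variables (dT : measure_display) (Omega : measurableType dT) (P : probability Omega R).
Variable dd : nat -> Omega -> bool.
Hypothesis l01 : forall x z, 0 < l x z < 1.
Hypothesis dd_meas : forall k, (0 < k)%N -> measurable [set w | dd k w = true].
Hypothesis dd_indep : indep_bits P dd.
Hypothesis dd_law : forall k, (0 < k)%N -> P [set w | dd k w = true] = (l s (xi k))%:E.

Lemma dd_falseE k : [set w | dd k w = false] = ~` [set w | dd k w = true].
Proof. by apply/seteqP; split => w /=; case: (dd k w). Qed.

Lemma measurable_dd k b : (0 < k)%N -> measurable [set w | dd k w = b].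
Proof. by case: b => k0; rewrite ?dd_falseE; [|apply: measurableC]; exact: dd_meas. Qed.

Lemma prob_dd k b : (0 < k)%N -> P [set w | dd k w = b] = (glik l b s (xi k))%:E.
Proof.
case: b => k0; first by rewrite glikT dd_law.
rewrite dd_falseE probability_setC; last exact: dd_meas.
by rewrite dd_law // glikF EFinB.
Qed.

Definition cyl n (f : {ffun 'I_n -> bool}) : set Omega := [set w | obs n (dd^~ w) = f].

Lemma cylE n (f : {ffun 'I_n -> bool}) :
  cyl f = \big[setI/setT]_(k < n) [set w | dd k.+1 w = f k].
Proof.
apply/seteqP; split => w.
  by move=> /= <-; apply: (big_ind (fun X : set Omega => X w)) => // k _; rewrite /= ffunE.
by move=> cylw; apply/ffunP => k; rewrite ffunE; move: cylw; rewrite (bigD1 k) // => -[].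
Qed.

Lemma measurable_cyl n (f : {ffun 'I_n -> bool}) : measurable (cyl f).
Proof. by rewrite cylE; apply: bigsetI_measurable => k _; exact: measurable_dd. Qed.

Lemma prob_cyl n (f : {ffun 'I_n -> bool}) : P (cyl f) = (lik l xi s f)%:E.
Proof.
pose b k := odflt false (omap f (insub k.-1)).
have bE (k : 'I_n) : b k.+1 = f k by rewrite /b /= valK.
have iotaE : iota 1 n = index_iota 1 n.+1 by rewrite /index_iota subSS subn0.
have := dd_indep b (iota_uniq 1 n).
rewrite iotaE !big_add1 /= !big_mkord => indep.
rewrite cylE (eq_bigr (fun k : 'I_n => [set w | dd k.+1 w = b k.+1])) => [|k _]; last first.
  by rewrite bE.
rewrite indep; last by apply/allP => k; rewrite mem_index_iota => /andP[].
by rewrite -prodEFin; apply: eq_bigr => k _; rewrite prob_dd // bE.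
Qed.

Lemma obs_preimageE n (A : pred {ffun 'I_n -> bool}) :
  [set w | A (obs n (dd^~ w))] = \big[setU/set0]_(f | A f) cyl f.
Proof.
apply/seteqP; split => w /=.
  by move=> Aw; rewrite (bigD1 (obs n (dd^~ w))) //=; left.
apply: (big_ind (fun X : set Omega => X w -> A (obs n (dd^~ w)))) => //.
  by move=> X Y wX wY [/wX|/wY].
by move=> f Af /= ->.
Qed.

Lemma measurable_obs_preimage n (A : pred {ffun 'I_n -> bool}) :
  measurable [set w | A (obs n (dd^~ w))].
Proof. by rewrite obs_preimageE; apply: bigsetU_measurable => f _; exact: measurable_cyl. Qed.

Lemma prob_obs_preimage_le n (A : pred {ffun 'I_n -> bool}) :
  (P [set w | A (obs n (dd^~ w))] <= (\sum_(f | A f) lik l xi s f)%:E)%E.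
Proof.
rewrite obs_preimageE; apply: le_trans (measure_bigsetU_le _ _ (@measurable_cyl n)) _.
by rewrite -sumEFin; apply: lee_sum => f _; rewrite -prob_cyl.
Qed.

Lemma prob_sqrt_lik_ratio_gt x n :
  (P [set w | (1 < n%:R * sqrt_lik_ratio l xi s x (obs n (dd^~ w)))%R] <=
   (n%:R * \prod_(k < n) (1 - (l s (xi k.+1) - l x (xi k.+1)) ^+ 2 / 4))%:E)%E.
Proof.
pose rho (f : {ffun 'I_n -> bool}) := sqrt_lik_ratio l xi s x f.
apply: le_trans (prob_obs_preimage_le (fun f => 1 < n%:R * rho f)) _.
have term_ge0 (f : {ffun 'I_n -> bool}) : 0 <= n%:R * rho f * lik l xi s f.
  by rewrite !mulr_ge0 ?sqrt_lik_ratio_ge0 // ltW ?lik_gt0.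
have markov : \sum_(f | 1 < n%:R * rho f) lik l xi s f <=
              \sum_f n%:R * rho f * lik l xi s f.
  rewrite [leRHS](bigID (fun f => 1 < n%:R * rho f)) /=.
  rewrite -[leLHS]addr0 lerD ?sumr_ge0 //.
  by apply: ler_sum => f /ltW gt1; rewrite ler_peMl // ltW ?lik_gt0.
rewrite lee_fin; apply: le_trans markov _.
under eq_bigr do rewrite -mulrA; rewrite -mulr_sumr ler_wpM2l //.
exact: sqrt_lik_ratio_mul_lik_sum_le.
Qed.

Lemma ae_eventually_sqrt_lik_ratio_le x p : 1 / 2 <= p ->
  (0 < limn_einf (fun n : nat => ((n%:R `^ p)^-1 *
     \sum_(1 <= k < n.+1) (l s (xi k) - l x (xi k)) ^+ 2)%:E))%E ->
  \forall w \near almost_everywhere P,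
    \forall n \near \oo, n%:R * sqrt_lik_ratio l xi s x (obs n (dd^~ w)) <= 1.
Proof.
move=> p12 /limn_einf_gt0[e e0 sep].
pose E n := [set w | (1 < n%:R * sqrt_lik_ratio l xi s x (obs n (dd^~ w)))%R].
have E_bound : \forall n \near \oo, (P (E n) <= (720 / (e / 4) ^+ 6 / n%:R ^+ 2)%:E)%E.
  near=> n.
  have n_gt0 : (0 < n)%N by near: n; exists 1%N.
  have sep_n : e / 4 * n%:R `^ p <= \sum_(k < n) (l s (xi k.+1) - l x (xi k.+1)) ^+ 2 / 4.
    have np_gt0 : 0 < n%:R `^ p by rewrite powR_gt0 // ltr0n.
    have : e <= (n%:R `^ p)^-1 * \sum_(1 <= k < n.+1) (l s (xi k) - l x (xi k)) ^+ 2.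
      by near: n.
    rewrite big_add1 /= big_mkord -mulr_suml => sep_n.
    by rewrite mulrAC ler_pM2r // -ler_pdivlMr // mulrC.
  apply: le_trans (prob_sqrt_lik_ratio_gt x n) _; rewrite lee_fin.
  apply: le_trans (natr_mul_expRN_powR_le _ p12 n_gt0); last by rewrite divr_gt0.
  rewrite ler_wpM2l //; apply: le_trans (prod_one_sub_le_expR _ _) _.
    move=> k; have /andP[? ?] := l01 s (xi k.+1); have /andP[? ?] := l01 x (xi k.+1).
    rewrite ler_pdivrMr //; nra.
  by rewrite ler_expR lerN2.
have E_meas n : measurable (E n) :=
  measurable_obs_preimage (fun f => 1 < n%:R * sqrt_lik_ratio l xi s x f).
apply: filterS (ae_eventually_notin E_meas E_bound) => w.
by apply: filterS => n /negP; rewrite -leNgt.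
Unshelve. all: by end_near.
Qed.
End observations.

Theorem theorem3 (R : realType) (q : nat) (S : set 'rV[R]_q)
  (l : 'rV[R]_q -> 'rV[R]_q -> R) (s : 'rV[R]_q) (xi : nat -> 'rV[R]_q)
  (dT : measure_display) (Omega : measurableType dT) (P : probability Omega R)
  (dd : nat -> Omega -> bool) (M : nat) (c : 'I_M -> 'rV[R]_q)
  (p0 : 'I_M -> R) (j : 'I_M) :
  compact S ->
  continuous (fun z : 'rV[R]_q * 'rV[R]_q => l z.1 z.2) ->
  (forall x y, 0 < l x y < 1) ->
  s \in S ->
  (exists B : R, forall k, `|xi k| <= B) ->
  (forall k, (0 < k)%N -> measurable [set w | dd k w = true]) ->
  indep_bits P dd ->
  (forall k, (0 < k)%N -> P [set w | dd k w = true] = (l s (xi k))%:E) ->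
  injective c ->
  (forall i, c i \in S) ->
  (forall i, 0 < p0 i < 1) ->
  \sum_(i < M) p0 i = 1 ->
  c j = s ->
  (forall i, i != j -> exists p : R, 1 / 2 < p /\
     (0 < limn_einf (fun n : nat =>
        ((n%:R `^ p)^-1 *
          \sum_(1 <= k < n.+1) (l s (xi k) - l (c i) (xi k)) ^+ 2)%:E))%E) ->
  {ae P, forall w, (fun k => phat l c p0 xi (fun k => dd k w) k j) @ \oo --> (1 : R)}.
Proof.
move=> _ _ l01 _ _ dd_meas dd_indep dd_law _ _ p0_01 p0_sum cj sep.
have p0_gt0 i : 0 < p0 i by case/andP: (p0_01 i).
have ae_sep : \forall w \near almost_everywhere P, forall i, i != j ->
    \forall n \near \oo, n%:R * sqrt_lik_ratio l xi s (c i) (obs n (dd^~ w)) <= 1.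
  apply: filter_forall => i; have [ij|_] := boolP (i != j); last exact: nearW.
  have [p [p_gt sep_i]] := sep i ij.
  apply: filterS (ae_eventually_sqrt_lik_ratio_le l01 dd_meas dd_indep dd_law (ltW p_gt) sep_i).
  by move=> w ev _.
apply: filterS ae_sep => w sep_w.
by apply: phat_cvg1 => //; rewrite cj.
Qed.
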